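(* Consider a market in which every hospital's utility is proportional to total wage, i.e. for each $h\in H$ there is $\gamma_h>0$ with $f_h(Y)=\gamma_h w_h(Y)$ for all $Y\subseteq X_h$. For each $h$, let $\mathrm{Ch}_h$ be the choice function that, given $X'\subseteq X_h$ (with $\mathrm{Ch}_h(\emptyset)=\emptyset$), sorts $X'$ in non-decreasing order of wage (ties broken by a fixed order) as $x^{(1)},\dots,x^{(|X'|)}$, starts with $Y=\emptyset$, for $i=1,\dots,|X'|-1$ adds $x^{(i)}$ to $Y$ if $w_h(Y\cup\{x^{(i)}\})<B_h$, then adds $x^{(|X'|)}$ and returns $Y$. Then the generalized deferred acceptance mechanism with these choice functions is strategy-proof for doctors and produces a $B'_H$-stable matching for some $B'_H$ with $B_h\le B'_h<B_h+\overline{w}_h$ for every $h\in H$.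
   Context: A market consists of a finite set of doctors $D$, a finite set of hospitals $H$, a finite set of contracts $X\subseteq D\times H\times\mathbb{R}_{>0}$ (contract $x=(d,h,w)$ has doctor $x_D=d$, hospital $x_H=h$, wage $x_W=w$), strict preferences $\succ_d$ of each doctor $d$ over $X_d\cup\{\emptyset\}$, utilities $f_h$ of each hospital on subsets of $X_h$, and budgets $B_h>0$ with $0<x_W\le B_h$ for all $x\in X_h$. For $Y\subseteq X$: $Y_d=\{x\in Y:x_D=d\}$, $Y_h=\{x\in Y:x_H=h\}$, $w_h(Y)=\sum_{x\in Y_h}x_W$; $\overline{w}_h=\max_{x\in X_h}x_W$. A matching is $Y\subseteq X$ with $|Y_d|\le1$ for all $d$. Given $B'_H=(B'_h)_h$, a matching $Y$ is $B'_H$-feasible if $w_h(Y)\le B'_h$ for all $h$; a matching $Z\subseteq X_h$ blocks $Y$ if every doctor $x_D$ with $x\in Z\setminus Y$ strictly prefers $x$ to her contract in $Y$ (or to $\emptyset$), $f_h(Z)>f_h(Y_h)$ and $w_h(Z)\le B'_h$; $Y$ is $B'_H$-stable if it is $B'_H$-feasible and not blocked by any $h$ and $Z\subseteq X_h$. Generalized deferred acceptance with hospital choice functions $\mathrm{Ch}_h$: let $\mathrm{Ch}_H(Y)=\bigcup_h\mathrm{Ch}_h(Y_h)$; $\mathrm{Ch}_d(Y)=\{x\}$ for the $\succ_d$-best $x\in Y_d$ if $x\succ_d\emptyset$, else $\emptyset$; $\mathrm{Ch}_D(Y)=\bigcup_d\mathrm{Ch}_d(Y_d)$. Set $R^{(0)}=\emptyset$;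 for $i=1,2,\dots$: $Y^{(i)}=\mathrm{Ch}_D(X\setminus R^{(i-1)})$, $Z^{(i)}=\mathrm{Ch}_H(Y^{(i)})$, $R^{(i)}=R^{(i-1)}\cup(Y^{(i)}\setminus Z^{(i)})$; if $Y^{(i)}=Z^{(i)}$, output $Y^{(i)}$. This is a mechanism mapping reported doctor preference profiles to matchings; it is strategy-proof for doctors if for every doctor $d$, every profile $\succ_D$ and every alternative report $\succ'_d$, the outcome of $d$ under $\succ_D$ is weakly $\succ_d$-preferred to her outcome under $(\succ'_d,\succ_{-d})$. *)

From HB Require Import structures.
From mathcomp Require Import all_boot all_order all_algebra.
Set Implicit Arguments. Unset Strict Implicit. Unset Printing Implicit Defensive.
Import Order.TTheory GRing.Theory Num.Theory.
Local Open Scope ring_scope.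

Section Market.
Variables (R : realFieldType) (D H C : finType).
Variables (cD : C -> D) (cH : C -> H) (wage : C -> R).

(* the domain X_d ∪ {∅} of doctor d's preferences; None stands for ∅ *)
Definition pref_dom (d : D) (a : option C) : bool :=
  if a is Some x then cD x == d else true.

(* p a b  means  a ≻_d b ;  p is a strict (total) preference on X_d ∪ {∅} *)
Definition strict_pref (d : D) (p : rel (option C)) : Prop :=
  [/\ (forall a, pref_dom d a -> ~~ p a a),
      (forall a b c, pref_dom d a -> pref_dom d b -> pref_dom d c ->
          p a b -> p b c -> p a c) &
      (forall a b, pref_dom d a -> pref_dom d b -> a != b -> p a b || p b a)].

Definition profile := D -> rel (option C).

Definition valid_profile (P : profile) : Prop := forall d, strict_pref d (P d).

Definition update (P : profile) (d : D) (p : rel (option C)) : profile :=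
  fun d' => if d' == d then p else P d'.

Definition restrH (h : H) (Y : {set C}) : {set C} := [set x in Y | cH x == h].
Definition wsum (h : H) (Y : {set C}) : R := \sum_(x in Y | cH x == h) wage x.
Definition wbar (h : H) : R := \big[Num.max/0]_(x | cH x == h) wage x.

Definition is_matching (Y : {set C}) : Prop :=
  forall d, (#|[set x in Y | cD x == d]| <= 1)%N.

Definition outcome (Y : {set C}) (d : D) : option C := [pick x in Y | cD x == d].

Definition best (P : profile) (Y : {set C}) (d : D) : option C :=
  [pick x | [&& x \in Y, cD x == d &
     [forall y, ((y \in Y) && (cD y == d) && (y != x)) ==> P d (Some x) (Some y)]]].

Definition chd (P : profile) (Y : {set C}) (d : D) : {set C} :=
  if best P Y d is Some x then (if P d (Some x) None then [set x] else set0)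
  else set0.

Definition chD (P : profile) (Y : {set C}) : {set C} := \bigcup_d chd P Y d.

Variables (B : H -> R) (tb : C -> nat).

Definition wage_order : rel C :=
  fun x y => (wage x < wage y) || ((wage x == wage y) && (tb x <= tb y)%N).

Definition chh (h : H) (X' : {set C}) : {set C} :=
  match sort wage_order (enum (restrH h X')) with
  | [::] => set0
  | x0 :: s' =>
      last x0 s' |:
        foldl (fun Y x => if wsum h (x |: Y) < B h then x |: Y else Y)
              set0 (belast x0 s')
  end.

Definition chH (Y : {set C}) : {set C} := \bigcup_h chh h (restrH h Y).

(* Since Z ⊆ Y, the rejected
   set strictly grows, so #|C|.+1 rounds always suffice; the fuel is never
   exhausted (the set0 default is never reached). *)
Fixpoint gda_loop (P : profile) (fuel : nat) (Rj : {set C}) : {set C} :=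
  match fuel with
  | O => set0
  | S n =>
      let Y := chD P (~: Rj) in
      let Z := chH Y in
      if Y == Z then Y else gda_loop P n (Rj :|: (Y :\: Z))
  end.

Definition gda (P : profile) : {set C} := gda_loop P #|C|.+1 set0.

Variable f : H -> {set C} -> R.

Definition feasible (B' : H -> R) (Y : {set C}) : Prop :=
  is_matching Y /\ forall h, wsum h Y <= B' h.

Definition blocks (P : profile) (B' : H -> R) (Y : {set C}) (h : H) (Z : {set C}) : Prop :=
  [/\ is_matching Z, (forall x, x \in Z -> cH x = h),
      (forall x, x \in Z -> x \notin Y -> P (cD x) (Some x) (outcome Y (cD x))),
      f h (restrH h Y) < f h Z & wsum h Z <= B' h].

Definition stable (P : profile) (B' : H -> R) (Y : {set C}) : Prop :=
  feasible B' Y /\ forall h Z, ~ blocks P B' Y h Z.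

Definition strategy_proof (M : profile -> {set C}) : Prop :=
  forall (P : profile) (d : D) (p' : rel (option C)),
    valid_profile P -> strict_pref d p' ->
    let a := outcome (M P) d in
    let b := outcome (M (update P d p')) d in
    a = b \/ P d a b.

End Market.

From HB Require Import structures.
From mathcomp Require Import all_boot all_order all_algebra.
Import Order.TTheory GRing.Theory Num.Theory.
Local Open Scope ring_scope.
Set Implicit Arguments. Unset Strict Implicit. Unset Printing Implicit Defensive.

(* The hospital choice function scans the contracts it holds by increasing wage
   and keeps those whose wage prefix stays below the budget B_h, together with
   the dearest one; hence the wages it keeps stay below B_h + overline{w}_h.  It
   is substitutable (a contract chosen from a set is chosen from every subset
   containing it) and obeys the law of aggregate demand (choosing from a larger
   set never yields fewer contracts).  Under these conditions of Hatfield and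
   Milgrom, deferred acceptance yields the doctor-optimal allocation that is
   stable for the choice functions, every doctor it matches is matched in every
   such allocation (rural hospitals), and truncating a manipulator's preferences
   turns a profitable misreport into a contradiction with the latter.  With
   B'_h = max(B_h, w_h(Y)), a hospital whose utility is proportional to wages
   cannot afford any set it would prefer to Y_h, since all the contracts offered
   to it would then fit in B_h and already be in Y_h. *)

Section WageOrder.
Context (R : realFieldType) (C : finType) {wage : C -> R} {tb : C -> nat}.
Local Notation le := (wage_order wage tb).

Lemma wage_order_refl x : le x x.
Proof. by rewrite /wage_order eqxx leqnn orbT. Qed.

Lemma wage_order_total x y : le x y || le y x.
Proof.
rewrite /wage_order; case: (ltgtP (wage x) (wage y)) => //= _.
exact: leq_total.
Qed.

Lemma wage_order_trans y x z : le x y -> le y z -> le x z.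
Proof.
rewrite /wage_order => /orP[lt1|/andP[/eqP e1 le1]] /orP[lt2|/andP[/eqP e2 le2]].
- by rewrite (lt_trans lt1 lt2).
- by rewrite -e2 lt1.
- by rewrite e1 lt2.
- by rewrite e1 e2 eqxx (leq_trans le1 le2) orbT.
Qed.

Lemma wage_order_nle x y : ~~ le x y -> le y x.
Proof. by case/orP: (wage_order_total x y) => ->. Qed.

Lemma wage_order_wage x y : le x y -> wage x <= wage y.
Proof. by rewrite /wage_order => /orP[/ltW|/andP[/eqP -> _]]. Qed.

Hypothesis tb_inj : injective tb.

Lemma wage_order_anti x y : le x y -> le y x -> x = y.
Proof.
rewrite /wage_order => /orP[lt1|/andP[/eqP e1 le1]] /orP[lt2|/andP[/eqP e2 le2]].
- by move: (lt_trans lt1 lt2); rewrite ltxx.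
- by move: lt1; rewrite e2 ltxx.
- by move: lt2; rewrite e1 ltxx.
- by apply: tb_inj; apply/eqP; rewrite eqn_leq le1 le2.
Qed.

Lemma wage_order_gtNge x y : x != y -> le x y -> ~~ le y x.
Proof. by move=> nxy xy; apply: contra nxy => yx; rewrite (wage_order_anti xy yx). Qed.

End WageOrder.

Section WageSums.
Variables (R : realFieldType) (H C : finType) (cH : C -> H) (wage : C -> R).
Hypothesis wage_gt0 : forall x, 0 < wage x.
Local Notation ws := (wsum cH wage).

Lemma wsum_le h (T T' : {set C}) :
  (forall x, x \in T -> cH x = h -> x \in T') -> ws h T <= ws h T'.
Proof.
move=> sub; rewrite /wsum [X in X <= _]big_mkcond [X in _ <= X]big_mkcond /=.
apply: ler_sum => x _; case: ifP => [/andP[xT /eqP xh]|_].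
  by rewrite (sub x xT xh) xh eqxx lexx.
by case: ifP => // _; apply: ltW.
Qed.

Lemma wsum_eq h (T T' : {set C}) :
  (forall x, cH x = h -> (x \in T) = (x \in T')) -> ws h T = ws h T'.
Proof.
move=> e; apply: eq_bigl => x.
by case: (eqVneq (cH x) h) => [/e ->|]; rewrite ?andbF.
Qed.

Lemma wsum_restrH h (Y : {set C}) : ws h (restrH cH h Y) = ws h Y.
Proof. by apply: wsum_eq => x xh; rewrite inE xh eqxx andbT. Qed.

Lemma wsumU1 h (T : {set C}) x :
  x \notin T -> cH x = h -> ws h (x |: T) = wage x + ws h T.
Proof.
move=> xT xh; rewrite /wsum (bigD1 x) /=; last by rewrite setU11 xh eqxx.
congr (_ + _); apply: eq_bigl => y; rewrite in_setU1.
by case: (eqVneq y x) => [->|] /=; rewrite ?(negbTE xT) ?andbF ?andbT.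
Qed.

Lemma wsumU1_le h (T : {set C}) x : ws h (x |: T) <= wage x + ws h T.
Proof.
case: (boolP (x \in T)) => xT.
  by rewrite (setUidPr _) ?sub1set // lerDr ltW.
case: (eqVneq (cH x) h) => [xh|xh]; first by rewrite wsumU1.
rewrite (@wsum_eq h (x |: T) T) ?lerDr ?ltW // => y yh.
by rewrite in_setU1; case: eqP => // yx; move: xh; rewrite -yx yh eqxx.
Qed.

Lemma wsum_addU1_le h (T T' : {set C}) x :
  (forall y, y \in T -> cH y = h -> y \in T') -> x \in T' -> x \notin T -> cH x = h ->
  ws h T + wage x <= ws h T'.
Proof.
move=> sub xT' xT xh; rewrite addrC -wsumU1 //; apply: wsum_le => y.
by rewrite in_setU1 => /orP[/eqP->//|/sub].
Qed.

Lemma wage_le_wbar x : wage x <= wbar cH wage (cH x).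
Proof. exact: le_bigmax_cond. Qed.

Lemma wbar_ge0 h : 0 <= wbar cH wage h.
Proof.
apply: (big_ind (fun v => 0 <= v)) => // [a b a0 _|y _]; first by rewrite le_max a0.
exact: ltW.
Qed.

End WageSums.

Section Preferences.
Variables (D C : finType) (cD : C -> D) (d : D) (p : rel (option C)).
Hypothesis p_strict : strict_pref cD d p.
Local Notation dom := (pref_dom cD d).

Lemma strict_pref_irr a : dom a -> ~~ p a a.
Proof. by case: p_strict => irr _ _; apply: irr. Qed.

Lemma strict_pref_trans a b c : dom a -> dom b -> dom c -> p a b -> p b c -> p a c.
Proof. by case: p_strict => _ tr _; apply: tr. Qed.

Lemma strict_pref_asym a b : dom a -> dom b -> p a b -> p b a -> False.
Proof.
move=> da db ab ba; have := strict_pref_trans da db da ab ba.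
by rewrite (negbTE (strict_pref_irr da)).
Qed.

Lemma strict_pref_total a b : dom a -> dom b -> a != b -> p a b || p b a.
Proof. by case: p_strict => _ _ tot; apply: tot. Qed.

End Preferences.

Lemma pref_dom_some (D C : finType) (cD : C -> D) x : pref_dom cD (cD x) (Some x).
Proof. exact: eqxx. Qed.

Section Outcomes.
Variables (D C : finType) (cD : C -> D).
Implicit Types (Y : {set C}) (e : D) (x : C).

Lemma outcome_some Y e x : outcome cD Y e = Some x -> x \in Y /\ cD x = e.
Proof. by rewrite /outcome; case: pickP => // x' /andP[xY /eqP xe] [<-]. Qed.

Lemma outcome_none Y e x : outcome cD Y e = None -> x \in Y -> cD x <> e.
Proof.
rewrite /outcome; case: pickP => // none _ xY xe.
by move: (none x); rewrite xY xe eqxx.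
Qed.

Lemma outcome_mem Y x : is_matching cD Y -> x \in Y -> outcome cD Y (cD x) = Some x.
Proof.
move=> mY xY; rewrite /outcome; case: pickP => [x' /andP[x'Y /eqP x'e]|none].
  by congr Some; apply/(card_le1_eqP (mY (cD x))); rewrite inE ?x'Y ?x'e ?xY eqxx.
by move: (none x); rewrite xY eqxx.
Qed.

Lemma pref_dom_outcome Y e : pref_dom cD e (outcome cD Y e).
Proof. by case E: outcome => [x|] //; have [_ <-] := outcome_some E; apply: pref_dom_some. Qed.

End Outcomes.

Section Truncation.
Variables (D C : finType) (cD : C -> D).
Implicit Types (ok : pred (option C)) (p : rel (option C)).

(* [truncate ok p] ranks the outcomes satisfying [ok] first, then being unmatched,
   then every other contract, each block ordered by [p]. *)
Definition trunc_rank (ok : pred (option C)) (u : option C) : nat :=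
  if u is Some _ then (if ok u then 2 else 0) else 1.

Definition truncate (ok : pred (option C)) (p : rel (option C)) : rel (option C) :=
  fun u v => (trunc_rank ok v < trunc_rank ok u)%N ||
             (trunc_rank ok u == trunc_rank ok v) && p u v.

Lemma truncate_strict d ok p : strict_pref cD d p -> strict_pref cD d (truncate ok p).
Proof.
move=> p_strict; split.
- by move=> a da; rewrite /truncate ltnn eqxx /= (negbTE (strict_pref_irr p_strict da)).
- move=> a b c da db dc; rewrite /truncate.
  move=> /orP[lt1|/andP[/eqP e1 p1]] /orP[lt2|/andP[/eqP e2 p2]].
  + by rewrite (ltn_trans lt2 lt1).
  + by rewrite -e2 lt1.
  + by rewrite e1 lt2.
  + by rewrite e1 e2 eqxx (strict_pref_trans p_strict da db dc p1 p2) orbT.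
- move=> a b da db ab; rewrite /truncate.
  by case: ltngtP => //= _; rewrite ?orbT // (strict_pref_total p_strict da db ab).
Qed.

Lemma truncate_some_none ok p x : truncate ok p (Some x) None = ok (Some x).
Proof. by rewrite /truncate /=; case: (ok (Some x)). Qed.

Lemma truncate_some_ok ok p x y : ok (Some x) -> ok (Some y) ->
  truncate ok p (Some x) (Some y) = p (Some x) (Some y).
Proof. by rewrite /truncate /= => -> ->. Qed.

Lemma truncate_above_ok ok p u y : ok (Some y) -> truncate ok p u (Some y) ->
  [/\ u != None, ok u & p u (Some y)].
Proof. by rewrite /truncate /= => ->; case: u => [x|] //=; case: (ok (Some x)). Qed.

End Truncation.

Section Updates.
Variables (D C : finType) (cD : C -> D) (P : profile D C) (d : D) (p : rel (option C)).

Lemma update_valid : valid_profile cD P -> strict_pref cD d p -> valid_profile cD (update P d p).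
Proof. by move=> P_valid p_strict e; rewrite /update; case: eqP => [->|]. Qed.

Lemma update_self : update P d p d = p.
Proof. by rewrite /update eqxx. Qed.

Lemma update_other e : e != d -> update P d p e = P e.
Proof. by rewrite /update => /negbTE ->. Qed.

End Updates.

Section DoctorChoice.
Variables (D C : finType) (cD : C -> D) (Q : profile D C).
Hypothesis Q_valid : valid_profile cD Q.
Local Notation ChD := (chD cD Q).
Implicit Types (S : {set C}) (e : D) (x y : C).

Lemma best_some S e x : best cD Q S e = Some x ->
  [/\ x \in S, cD x = e & forall y, y \in S -> cD y = e -> y != x -> Q e (Some x) (Some y)].
Proof.
rewrite /best; case: pickP => // x' /and3P[xS /eqP xe /forallP xbest] [<-].
by split=> // y yS ye yx; move: (xbest y); rewrite yS ye eqxx yx.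
Qed.

Lemma chD_mem S x : x \in ChD S = [&& x \in S, Q (cD x) (Some x) None &
  [forall y, (y \in S) && (cD y == cD x) && (y != x) ==> Q (cD x) (Some x) (Some y)]].
Proof.
apply/bigcupP/idP => [[e _]|/and3P[xS xacc /forallP xbest]].
  rewrite /chd; case E: best => [x'|]; last by rewrite inE.
  have [x'S x'e x'best] := best_some E.
  case: ifP => x'acc; last by rewrite inE.
  rewrite inE => /eqP ->; rewrite x'S x'e x'acc /=; apply/forallP=> y; apply/implyP.
  by move=> /andP[/andP[yS /eqP ye] yx]; apply: x'best.
exists (cD x) => //; rewrite /chd /best.
case: pickP => [x' /and3P[x'S /eqP x'e /forallP x'best]|none]; last first.
  by move: (none x); rewrite xS eqxx /= => /negP[]; apply/forallP.
case: (eqVneq x' x) => [->|x'x]; first by rewrite xacc inE.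
have := x'best x; rewrite xS eqxx eq_sym x'x /= => x'x_pref.
have := xbest x'; rewrite x'S x'e eqxx x'x /= => xx'_pref.
case: (strict_pref_asym (Q_valid (cD x)) (pref_dom_some cD x) _ xx'_pref x'x_pref).
by rewrite /pref_dom x'e.
Qed.

Lemma chD_sub S x : x \in ChD S -> x \in S.
Proof. by rewrite chD_mem => /andP[]. Qed.

Lemma chD_acceptable S x : x \in ChD S -> Q (cD x) (Some x) None.
Proof. by rewrite chD_mem => /and3P[]. Qed.

Lemma chD_best S x y : x \in ChD S -> y \in S -> cD y = cD x -> y != x ->
  Q (cD x) (Some x) (Some y).
Proof.
rewrite chD_mem => /and3P[_ _ /forallP xbest] yS yx neq.
by move: (xbest y); rewrite yS yx eqxx neq.
Qed.

Lemma chD_matching S : is_matching cD (ChD S).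
Proof.
move=> e; apply/card_le1_eqP => x y; rewrite !inE => /andP[xCh /eqP xe] /andP[yCh /eqP ye].
apply/eqP/negPn/negP=> yx; have xy : x != y by rewrite eq_sym.
have exy : cD x = cD y by rewrite xe ye.
have xy_pref := chD_best xCh (chD_sub yCh) (esym exy) yx.
have yx_pref := chD_best yCh (chD_sub xCh) exy xy.
rewrite -exy in yx_pref.
by case: (strict_pref_asym (Q_valid (cD x)) _ _ xy_pref yx_pref); rewrite /pref_dom ?exy.
Qed.

Lemma exists_pref_max e (T : {set C}) x0 : x0 \in T -> (forall x, x \in T -> cD x = e) ->
  exists2 x, x \in T & forall y, y \in T -> y != x -> Q e (Some x) (Some y).
Proof.
move=> x0T Te; pose beaten x := [set y in T | Q e (Some x) (Some y)].
have [x xT xmax] := arg_maxnP (fun x => #|beaten x|) x0T.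
exists x => // y yT yx.
have dom z : z \in T -> pref_dom cD e (Some z) by move=> /Te <-; apply: pref_dom_some.
have xy : Some x != Some y by apply: contraNneq yx => -[->].
case/orP: (strict_pref_total (Q_valid e) (dom x xT) (dom y yT) xy) => // yx_pref.
have : (#|beaten x| < #|beaten y|)%N.
  have sub : x |: beaten x \subset beaten y.
    apply/subsetP=> z; rewrite in_setU1 !inE => /orP[/eqP->|/andP[zT xz]].
      by apply/andP; split.
    by rewrite zT (strict_pref_trans (Q_valid e) (dom y yT) (dom x xT) (dom z zT) yx_pref xz).
  apply: leq_trans (subset_leq_card sub); rewrite cardsU1 inE.
  by rewrite (negbTE (strict_pref_irr (Q_valid e) (dom x xT))) andbF.
by move/leq_trans/(_ (xmax y yT)); rewrite ltnn.
Qed.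

Lemma chD_unmatched S e y : outcome cD (ChD S) e = None -> y \in S -> cD y = e ->
  ~~ Q e (Some y) None.
Proof.
move=> none yS ye; apply/negP=> yacc.
have yT : y \in [set z in S | cD z == e] by rewrite inE yS ye eqxx.
have [x] : exists2 x, x \in [set z in S | cD z == e] &
    forall z, z \in [set z in S | cD z == e] -> z != x -> Q e (Some x) (Some z).
  by apply: exists_pref_max yT _ => z; rewrite inE => /andP[_ /eqP].
rewrite inE => /andP[xS /eqP xe] xbest.
case: (boolP (Q e (Some x) None)) => xacc.
  have xCh : x \in ChD S.
    rewrite chD_mem xS xe xacc; apply/forallP=> z; apply/implyP=> /andP[/andP[zS /eqP ze] zx].
    by apply: xbest; rewrite // inE zS ze eqxx.
  exact: outcome_none none xCh xe.
have [yx|yx] := eqVneq y x; first by rewrite -yx yacc in xacc.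
move: xacc; rewrite (strict_pref_trans (Q_valid e) _ _ _ (xbest y yT yx) yacc) //.
- by rewrite -xe pref_dom_some.
- by rewrite -ye pref_dom_some.
Qed.

Lemma chD_no_better S x : x \in S -> ~~ Q (cD x) (Some x) (outcome cD (ChD S) (cD x)).
Proof.
move=> xS; case E: outcome => [z|]; last exact: chD_unmatched E xS erefl.
have [zCh ze] := outcome_some E.
have [<-|xz] := eqVneq x z; first exact: (strict_pref_irr (Q_valid (cD x)) (pref_dom_some cD x)).
have zx := chD_best zCh xS (esym ze) xz; rewrite ze in zx; apply/negP=> xz_pref.
by apply: (strict_pref_asym (Q_valid (cD x)) _ _ xz_pref zx); rewrite /pref_dom ?ze.
Qed.

End DoctorChoice.

Section Hospitals.
Variables (R : realFieldType) (D H C : finType) (cD : C -> D) (cH : C -> H).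
Variables (wage : C -> R) (B : H -> R) (tb : C -> nat).
Hypothesis wage_gt0 : forall x, 0 < wage x.
Hypothesis tb_inj : injective tb.
Hypothesis B_gt0 : forall h, 0 < B h.
Local Notation le := (wage_order wage tb).
Local Notation ws := (wsum cH wage).
Local Notation Ch := (chh cH wage B tb).
Implicit Types (S T : {set C}).

Definition wage_prefix S x := [set y in S | le y x].

Definition wage_max h S x := [forall y, (y \in S) && (cH y == h) ==> le y x].

Definition greedy_step h S x := if ws h (x |: S) < B h then x |: S else S.

Lemma wsum0 h : ws h set0 = 0.
Proof. by rewrite /wsum big_pred0 // => x; rewrite inE. Qed.

Lemma wage_prefixU1_gt S z y : ~~ le z y -> wage_prefix (z |: S) y = wage_prefix S y.
Proof.
move=> zy; apply/setP=> x; rewrite !inE.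
by case: eqP => [->|] /=; rewrite ?(negbTE zy) ?andbF.
Qed.

Lemma wage_prefixU1_max S z : {in S, forall y, le y z} -> wage_prefix (z |: S) z = z |: S.
Proof.
move=> Sz; apply/setP=> x; rewrite !inE.
case: eqP => [->|_] /=; first by rewrite wage_order_refl.
by case: (boolP (x \in S)) => // /Sz ->.
Qed.

(* The last clause says that once the greedy scan has rejected a contract, it
   rejects every dearer one too. *)
Definition greedy_invariant h (L G : {set C}) :=
  [/\ G = [set x in L | ws h (wage_prefix L x) < B h], ws h G < B h &
      G = L \/ forall w, {in L, forall y, wage y <= wage w} -> B h <= ws h G + wage w].

Lemma greedy_invariant0 h : greedy_invariant h set0 set0.
Proof.
rewrite /greedy_invariant wsum0 B_gt0; split=> //; last by left.
by apply/setP=> x; rewrite !inE.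
Qed.

Lemma greedy_invariantU1 h (L G : {set C}) z : z \notin L -> cH z = h -> {in L, forall y, le y z} ->
  greedy_invariant h L G -> greedy_invariant h (z |: L) (greedy_step h G z).
Proof.
move=> zL zh Lz [GE GB GD].
have zgt : {in L, forall y, ~~ le z y}.
  move=> y yL; apply: wage_order_gtNge (Lz y yL) => //.
  by apply: contraNneq zL => <-.
have GL x : x \in G -> x \in L by rewrite GE inE => /andP[].
have zG : z \notin G by apply: contra zL; apply: GL.
have z_max : {in L, forall y, wage y <= wage z} by move=> y /Lz /wage_order_wage.
have memG x : x != z ->
    (x \in [set x in z |: L | ws h (wage_prefix (z |: L) x) < B h]) = (x \in G).
  move=> xz; rewrite GE !inE (negbTE xz) /=.
  by case: (boolP (x \in L)) => //= xL; rewrite wage_prefixU1_gt ?zgt.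
have acceptE : (ws h (z |: G) < B h) = (wage z + ws h L < B h).
  rewrite wsumU1 //; case: GD => [<-//|GD].
  have Gz := GD z z_max; rewrite addrC in Gz; apply/idP/idP => lt.
    by move: (le_lt_trans Gz lt); rewrite ltxx.
  have LG : ws h G <= ws h L by apply: (wsum_le wage_gt0) => x /GL.
  by move: (le_lt_trans Gz (le_lt_trans (lerD (lexx _) LG) lt)); rewrite ltxx.
have prefix_z : ws h (wage_prefix (z |: L) z) = wage z + ws h L.
  by rewrite wage_prefixU1_max // wsumU1.
rewrite /greedy_step acceptE; case: ifP => accept; split.
- apply/setP=> x; rewrite in_setU1; case: (eqVneq x z) => [->|xz]; last by rewrite memG.
  by rewrite !inE eqxx prefix_z accept.
- by rewrite acceptE.
- case: GD => [->|GD]; first by left.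
  have := GD z z_max; rewrite addrC -wsumU1 // => ge.
  by move: accept; rewrite -acceptE => /(le_lt_trans ge); rewrite ltxx.
- apply/setP=> x; case: (eqVneq x z) => [->|xz]; last by rewrite memG.
  by rewrite (negbTE zG) !inE eqxx prefix_z accept.
- exact: GB.
- right=> w zw; move/negbT: accept; rewrite -acceptE wsumU1 // -leNgt => le1.
  by apply: le_trans le1 _; rewrite addrC lerD2l zw // setU11.
Qed.

Lemma greedy_fold_spec h (l : seq C) :
  uniq l -> pairwise le l -> all (fun x => cH x == h) l ->
  greedy_invariant h [set x | x \in l] (foldl (greedy_step h) set0 l).
Proof.
elim/last_ind: l => [_ _ _|l0 z IH].
  have -> : [set x | x \in [::]] = set0 :> {set C} by apply/setP=> x; rewrite !inE.
  exact: greedy_invariant0.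
rewrite rcons_uniq pairwise_rcons all_rcons => /andP[zl0 ul0] /andP[/allP l0z pl0].
move=> /andP[/eqP zh hl0]; rewrite foldl_rcons.
have -> : [set x | x \in rcons l0 z] = z |: [set x | x \in l0].
  by apply/setP=> x; rewrite !inE mem_rcons inE.
apply: greedy_invariantU1; rewrite ?inE //; last exact: IH.
by move=> y; rewrite inE => /l0z.
Qed.

Lemma chh_cases h S :
  (restrH cH h S = set0 /\ Ch h S = set0) \/
  exists m bl, [/\ Ch h S = m |: foldl (greedy_step h) set0 bl,
    restrH cH h S = m |: [set x | x \in bl], m \notin bl, {in bl, forall y, le y m} &
    [/\ uniq bl, pairwise le bl & all (fun x => cH x == h) bl]].
Proof.
rewrite /chh; set s := sort le (enum (restrH cH h S)).
have ms : s =i restrH cH h S by move=> x; rewrite mem_sort mem_enum.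
have us : uniq s by rewrite sort_uniq enum_uniq.
have ps : pairwise le s.
  rewrite -(sorted_pairwise (@wage_order_trans _ _ _ _)) sort_sorted //.
  exact: wage_order_total.
case Hs: s => [|x0 s'] in ms us ps *.
  by left; split=> //; apply/setP=> x; rewrite -ms inE.
right; exists (last x0 s'), (belast x0 s'); move: ms us ps; rewrite lastI.
rewrite rcons_uniq pairwise_rcons => ms /andP[mbl ubl] /andP[/allP blm pbl].
have hbl : all (fun x => cH x == h) (belast x0 s').
  by apply/allP=> x xbl; move: (ms x); rewrite mem_rcons inE xbl orbT inE => /esym/andP[].
by split=> //; apply/setP=> x; rewrite -ms mem_rcons !inE.
Qed.

Lemma chh_mem h S x :
  x \in Ch h S = [&& x \in S, cH x == h & wage_max h S x || (ws h (wage_prefix S x) < B h)].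
Proof.
have [[S0 ->]|[m [bl [ChE SE mbl blm [ubl pbl hbl]]]]] := chh_cases h S.
  by move/setP: S0 => /(_ x); rewrite !inE andbA => ->.
have [GE _ _] := greedy_fold_spec ubl pbl hbl.
have SmE y : ((y \in S) && (cH y == h)) = (y \in m |: [set x | x \in bl]).
  by rewrite -SE inE.
rewrite ChE andbA SmE GE !inE; case: (eqVneq x m) => [->|xm] /=.
  apply/esym/orP; left; apply/forallP=> y; apply/implyP.
  by rewrite SmE !inE => /orP[/eqP->|/blm]; rewrite ?wage_order_refl.
case: (boolP (x \in bl)) => //= xbl.
have mx : ~~ le m x by apply: wage_order_gtNge (blm x xbl) => //; rewrite eq_sym.
have -> : wage_max h S x = false.
  by apply/negbTE/forallP=> /(_ m); rewrite SmE setU11 /= (negbTE mx).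
congr (_ < _); apply: wsum_eq => y yh; move: (SmE y); rewrite yh eqxx andbT !inE => ->.
by case: eqP => [->|] //=; rewrite (negbTE mbl) (negbTE mx).
Qed.

Lemma chh_wsum_lt h S : ws h (Ch h S) < B h + wbar cH wage h.
Proof.
have [[_ ->]|[m [bl [-> SE _ _ [ubl pbl hbl]]]]] := chh_cases h S.
  by rewrite wsum0 ltr_wpDr ?wbar_ge0.
have [_ GB _] := greedy_fold_spec ubl pbl hbl.
have mh : cH m = h by move/setP: SE => /(_ m); rewrite setU11 inE => /andP[_ /eqP].
apply: le_lt_trans (wsumU1_le cH wage_gt0 _ _ _) _; rewrite addrC ltr_leD //.
by rewrite -mh wage_le_wbar.
Qed.

Lemma chh_wsum_ge h S : B h <= ws h S -> B h <= ws h (Ch h S).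
Proof.
have [[S0 ->]|[m [bl [-> SE mbl blm [ubl pbl hbl]]]]] := chh_cases h S.
  by rewrite -wsum_restrH S0 wsum0 => /(lt_le_trans (B_gt0 h)); rewrite ltxx.
have [GE _ [->|GD]] := greedy_fold_spec ubl pbl hbl.
  by rewrite -SE wsum_restrH.
have mh : cH m = h by move/setP: SE => /(_ m); rewrite setU11 inE => /andP[_ /eqP].
have mG : m \notin foldl (greedy_step h) set0 bl by rewrite GE !inE negb_and mbl.
move=> _; rewrite wsumU1 // addrC; apply: GD => y; rewrite inE => /blm.
exact: wage_order_wage.
Qed.

Lemma chh_eq h S S' : restrH cH h S = restrH cH h S' -> Ch h S = Ch h S'.
Proof. by rewrite /chh => ->. Qed.

Lemma chh_restrH h S : Ch h (restrH cH h S) = Ch h S.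
Proof. by apply: chh_eq; apply/setP=> x; rewrite !inE -andbA andbb. Qed.

Lemma chh_sub h S x : x \in Ch h S -> x \in S /\ cH x = h.
Proof. by rewrite chh_mem => /and3P[-> /eqP ->]. Qed.

Lemma chh_substitutable h S S' x : (forall y, y \in S -> cH y = h -> y \in S') ->
  x \in S -> x \in Ch h S' -> x \in Ch h S.
Proof.
move=> sub xS; rewrite !chh_mem xS => /and3P[_ -> /orP[xmax|xfits]] /=.
  apply/orP; left; apply/forallP=> y; apply/implyP=> /andP[yS yh].
  by move/forallP: xmax => /(_ y); rewrite (sub y yS (eqP yh)) yh.
apply/orP; right; apply: le_lt_trans xfits; apply: (wsum_le wage_gt0) => y.
by rewrite !inE => /andP[yS ->] yh; rewrite (sub y yS yh).
Qed.

Lemma chh_wsum_lt_id h S : ws h S < B h -> Ch h S = restrH cH h S.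
Proof.
move=> fits; apply/setP=> x; rewrite chh_mem inE.
case: (x \in S) (eqVneq (cH x) h) => [] [xh|] //=.
apply/orP; right; apply: le_lt_trans fits; apply: (wsum_le wage_gt0) => y.
by rewrite inE => /andP[].
Qed.

Lemma wage_maxU1 h S z x : cH z = h -> wage_max h (z |: S) x = le z x && wage_max h S x.
Proof.
move=> zh; apply/forallP/andP => [zSx|[zx /forallP Sx] y].
  split; first by have := zSx z; rewrite setU11 zh eqxx.
  apply/forallP=> y; apply/implyP=> /andP[yS yh].
  by have := zSx y; rewrite in_setU1 yS orbT yh.
apply/implyP; rewrite in_setU1 => /andP[/orP[/eqP->//|yS] yh].
by have := Sx y; rewrite yS yh.
Qed.

Lemma wsum_prefixU1 h S z x : z \notin S -> cH z = h ->
  ws h (wage_prefix (z |: S) x) = (if le z x then wage z else 0) + ws h (wage_prefix S x).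
Proof.
move=> zS zh; case: ifP => zx; last first.
  by rewrite add0r wage_prefixU1_gt ?zx.
rewrite -wsumU1 ?inE ?(negbTE zS) //; congr (ws h _); apply/setP=> y.
by rewrite !inE; case: eqP => // ->; rewrite zx.
Qed.

Section AddOneContract.
Variables (h : H) (S : {set C}) (z : C).
Hypotheses (zS : z \notin S) (zh : cH z = h).

Lemma chh_dropped x : x \in Ch h S -> x \notin Ch h (z |: S) ->
  [/\ x \in S, cH x = h & (wage_max h S x /\ ~~ le z x) \/
    [/\ le z x, ws h (wage_prefix S x) < B h & B h <= wage z + ws h (wage_prefix S x)]].
Proof.
rewrite !chh_mem in_setU1 => /and3P[xS /eqP xh xin].
rewrite xS orbT xh eqxx /= wage_maxU1 // wsum_prefixU1 // negb_or -leNgt.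
move=> /andP[xmax xfits]; split=> //; case/orP: xin => [Sxmax|Sxfits].
  by left; split=> //; move: xmax; rewrite Sxmax andbT.
have zx : le z x by apply: contraTT xfits; move/negbTE => ->; rewrite add0r -ltNge.
by right; split=> //; rewrite zx in xfits.
Qed.

Lemma chh_dropped_chosen x : x \in Ch h S -> x \notin Ch h (z |: S) -> z \in Ch h (z |: S).
Proof.
move=> xin xout; have [xS xh drop] := chh_dropped xin xout.
rewrite chh_mem setU11 zh eqxx /=.
case: drop => [[xmax zx]|[zx xfits _]].
  have xz := wage_order_nle zx.
  apply/orP; left; rewrite wage_maxU1 // wage_order_refl /=.
  apply/forallP=> y; apply/implyP=> /andP[yS yh].
  by apply: wage_order_trans xz; move/forallP: xmax => /(_ y); rewrite yS yh.
apply/orP; right; rewrite wsum_prefixU1 // wage_order_refl.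
apply: le_lt_trans xfits; rewrite addrC.
apply: le_trans (wsum_addU1_le wage_gt0 (T := wage_prefix S z) (x := x) _ _ _ xh).
  by rewrite lerD2l (wage_order_wage zx).
- by move=> y; rewrite !inE => /andP[-> yz] _; apply: wage_order_trans yz zx.
- by rewrite inE xS wage_order_refl.
rewrite inE xS /=; apply: wage_order_gtNge zx => //.
by apply: contraNneq zS => ->.
Qed.

Lemma chh_dropped_unique x1 x2 :
  x1 \in Ch h S -> x1 \notin Ch h (z |: S) -> x2 \in Ch h S -> x2 \notin Ch h (z |: S) ->
  x1 = x2.
Proof.
wlog x12 : x1 x2 / le x1 x2.
  move=> wlog_le in1 out1 in2 out2.
  have [le12|/wage_order_nle le21] := boolP (le x1 x2); first exact: wlog_le.
  by apply/esym; apply: wlog_le.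
move=> in1 out1 in2 out2; apply/eqP; apply/negPn/negP => neq12.
have [x1S x1h drop1] := chh_dropped in1 out1.
have [x2S x2h drop2] := chh_dropped in2 out2.
have x21 : ~~ le x2 x1 by apply: wage_order_gtNge x12.
case: drop1 => [[x1max _]|[zx1 _ x1over]].
  by move/forallP: x1max => /(_ x2); rewrite x2S x2h eqxx /= (negbTE x21).
have zx2 := wage_order_trans zx1 x12.
case: drop2 => [[_ zx2']|[_ x2fits _]]; first by rewrite zx2 in zx2'.
suff : B h <= ws h (wage_prefix S x2) by rewrite leNgt x2fits.
apply: le_trans x1over _; rewrite addrC.
apply: le_trans (wsum_addU1_le wage_gt0 (T := wage_prefix S x1) _ _ _ x2h).
  by rewrite lerD2l (wage_order_wage zx2).
- by move=> y; rewrite !inE => /andP[-> yx1] _; apply: wage_order_trans yx1 x12.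
- by rewrite inE x2S wage_order_refl.
- by rewrite inE x2S.
Qed.

Lemma chh_card_setU1 : (#|Ch h S| <= #|Ch h (z |: S)|)%N.
Proof.
have [sub|/subsetPn[x xin xout]] := boolP (Ch h S \subset Ch h (z |: S)).
  exact: subset_leq_card.
rewrite (cardsD1 x) (cardsD1 z (Ch h (z |: S))) xin (chh_dropped_chosen xin xout) ltnS.
apply/subset_leq_card/subsetP=> y; rewrite !inE => /andP[yx yin].
have [yS _] := chh_sub yin.
rewrite (_ : y != z); last by apply: contraNneq zS => <-.
by apply: contraR yx => yout; rewrite (chh_dropped_unique yin yout xin xout).
Qed.

End AddOneContract.

Lemma chh_card_mono h S S' : S \subset S' -> (#|Ch h S| <= #|Ch h S'|)%N.
Proof.
move Dn : #|S' :\: S| => n; elim: n S Dn => [|n IH] S Dn sub.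
  suff -> : S' = S by [].
  by apply/eqP; rewrite eqEsubset sub andbT -setD_eq0 -cards_eq0 Dn.
have [z] : exists z, z \in S' :\: S by apply/set0Pn; rewrite -card_gt0 Dn.
rewrite inE => /andP[zS zS'].
have {}IH : (#|Ch h (z |: S)| <= #|Ch h S'|)%N.
  apply: IH; last by rewrite subUset sub1set zS' sub.
  move: Dn; rewrite (cardsD1 z) inE zS zS' add1n => -[<-].
  by rewrite setDDl setUC.
case: (eqVneq (cH z) h) => [zh|zh]; first exact: leq_trans (chh_card_setU1 zS zh) IH.
rewrite (@chh_eq h S (z |: S)) //.
by apply/setP=> y; rewrite !inE; case: (eqVneq y z) => [->|] //=; rewrite (negbTE zh) !andbF.
Qed.

(* Substitutability gives Ch h S \subset Ch h T, and the law of aggregate demand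
   turns this into an equality. *)
Lemma chh_sandwich h S T : Ch h S \subset T -> T \subset S -> Ch h T = Ch h S.
Proof.
move=> ChST TS; apply/eqP; rewrite eq_sym eqEcard chh_card_mono // andbT.
apply/subsetP=> x xCh; apply: chh_substitutable (subsetP ChST x xCh) xCh.
by move=> y /(subsetP TS).
Qed.

Local Notation ChH := (chH cH wage B tb).
Local Notation gda := (gda cD cH wage B tb).
Implicit Types (Q : profile D C) (Y Rj : {set C}).

Lemma chH_mem Y x : (x \in ChH Y) = (x \in Ch (cH x) Y).
Proof.
apply/bigcupP/idP => [[h _ xCh]|xCh]; last by exists (cH x); rewrite ?chh_restrH.
by have [_ xh] := chh_sub xCh; rewrite -chh_restrH xh.
Qed.

Lemma chH_sub Y x : x \in ChH Y -> x \in Y.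
Proof. by rewrite chH_mem => /chh_sub[]. Qed.

Lemma chH_substitutable Y Y' x : Y \subset Y' -> x \in Y -> x \in ChH Y' -> x \in ChH Y.
Proof.
move=> /subsetP YY' xY; rewrite !chH_mem; apply: chh_substitutable xY => // y yY _.
exact: YY'.
Qed.

Lemma chH_restrH_id h Y : ChH Y = Y -> Ch h (restrH cH h Y) = restrH cH h Y.
Proof.
move=> ChY; apply/setP=> x; rewrite chh_restrH inE.
have [<-|xh] := eqVneq (cH x) h; first by rewrite -chH_mem ChY andbT.
by rewrite andbF; apply/negP=> /chh_sub[_ /eqP]; rewrite (negbTE xh).
Qed.

Definition offers Q Y h := [set x | (cH x == h) &&
  ((x \in Y) || Q (cD x) (Some x) (outcome cD Y (cD x)))].

(* Stability in the sense of Hatfield and Milgrom, relative to the choice functions. *)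
Definition choice_stable Q Y := [/\ is_matching cD Y,
  forall x, x \in Y -> Q (cD x) (Some x) None & forall h, Ch h (offers Q Y h) = restrH cH h Y].

Lemma restrH_offers Q Y h : restrH cH h Y \subset offers Q Y h.
Proof. by apply/subsetP=> x; rewrite !inE => /andP[-> ->]. Qed.

Lemma choice_stable_restrH_id Q Y h : choice_stable Q Y -> Ch h (restrH cH h Y) = restrH cH h Y.
Proof. by case=> _ _ ChY; rewrite (@chh_sandwich h (offers Q Y h)) ?ChY ?restrH_offers. Qed.

Section Run.
Variable Q : profile D C.
Hypothesis Q_valid : valid_profile cD Q.

Definition proposals Rj := chD cD Q (~: Rj).

Definition next_rejected Rj := Rj :|: (proposals Rj :\: ChH (proposals Rj)).

Definition round_invariant (Inv : {set C} -> Prop) :=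
  forall Rj, Inv Rj -> proposals Rj != ChH (proposals Rj) -> Inv (next_rejected Rj).

Lemma gda_loop_spec n Rj0 : (#|~: Rj0| < n)%N ->
  exists Rj, [/\ forall Inv, round_invariant Inv -> Inv Rj0 -> Inv Rj,
    ChH (proposals Rj) = proposals Rj & gda_loop cD cH wage B tb Q n Rj0 = proposals Rj].
Proof.
elim: n Rj0 => [//|n IH] Rj0 /= Rj0n; rewrite -/(proposals Rj0).
have [final|running] := eqVneq (proposals Rj0) (ChH (proposals Rj0)).
  by exists Rj0; split.
have : (#|~: next_rejected Rj0| < #|~: Rj0|)%N.
  apply: proper_card; rewrite properE setCS subsetUl /=.
  have [x xY xZ] : exists2 x, x \in proposals Rj0 & x \notin ChH (proposals Rj0).
    apply/subsetPn; apply: contra running => sub.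
    by rewrite eqEsubset sub; apply/subsetP=> x /chH_sub.
  apply/subsetPn; exists x; first exact: (chD_sub Q_valid xY).
  by rewrite !inE xY xZ orbT.
move=> /leq_trans /(_ Rj0n) /IH[Rj [inv fixed ->]].
by exists Rj; split=> // Inv round Inv0; apply: inv => //; apply: round.
Qed.

Lemma gda_spec : exists Rj, [/\ forall Inv, round_invariant Inv -> Inv set0 -> Inv Rj,
  ChH (proposals Rj) = proposals Rj & gda Q = proposals Rj].
Proof. by apply: gda_loop_spec; rewrite setC0 cardsT. Qed.

Lemma proposals_mono Rj Rj' x : Rj \subset Rj' -> x \in proposals Rj ->
  (x \in Rj') || (x \in proposals Rj').
Proof.
move=> sub xY; have [//|xR] := boolP (x \in Rj').
rewrite /proposals chD_mem // inE xR (chD_acceptable Q_valid xY) /=.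
apply/forallP=> y; apply/implyP=> /andP[/andP[yR /eqP yx] ne].
apply: (chD_best Q_valid xY) => //.
by move: yR; rewrite !inE; apply: contra; apply: (subsetP sub).
Qed.

(* Invariant: a rejected contract is never chosen from the rejected and proposed
   contracts together. *)
Lemma gda_choice_stable : choice_stable Q (gda Q).
Proof.
pose Inv Rj := forall x, x \in Rj -> x \notin ChH (Rj :|: proposals Rj).
have round : round_invariant Inv.
  move=> Rj InvR _ x; have sub : Rj \subset next_rejected Rj by apply: subsetUl.
  have grow : Rj :|: proposals Rj \subset next_rejected Rj :|: proposals (next_rejected Rj).
    rewrite subUset (subset_trans sub (subsetUl _ _)) /=.
    by apply/subsetP=> y yY; rewrite in_setU; apply: proposals_mono sub yY.
  rewrite !inE => /orP[xR|/andP[xZ xY]].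
    by apply: contra (InvR x xR); apply: chH_substitutable; rewrite // inE xR.
  by apply: contra xZ; apply: chH_substitutable xY; apply: subset_trans grow; apply: subsetUr.
have [Rj [inv fixed ->]] := gda_spec.
have InvR : Inv Rj by apply: inv round _ => x; rewrite inE.
set Y := proposals Rj in fixed InvR *.
split=> [|x|h]; [exact: chD_matching | exact: chD_acceptable | set T := Rj :|: Y].
have ChT_Y : Ch h T \subset restrH cH h Y.
  apply/subsetP=> x xCh; have [xT xh] := chh_sub xCh; rewrite inE xh eqxx andbT.
  move: xT; rewrite inE => /orP[xR|//]; move: (InvR x xR).
  by rewrite chH_mem xh xCh.
have offers_T : offers Q Y h \subset T.
  apply/subsetP=> x; rewrite !inE => /andP[_ /orP[->|better]]; first by rewrite orbT.
  apply/orP; left; apply: contraLR better => xR.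
  by apply: (chD_no_better Q_valid); rewrite inE.
rewrite (chh_sandwich (subset_trans ChT_Y (restrH_offers _ _ _)) offers_T).
rewrite -(chh_sandwich ChT_Y); first exact: chH_restrH_id.
by apply/subsetP=> x; rewrite !inE => /andP[-> _]; rewrite orbT.
Qed.

(* Invariant: every rejected contract lies outside Y and is preferred by its
   doctor to her contract in Y, so no contract of Y is ever rejected. *)
Lemma gda_doctor_optimal Y : choice_stable Q Y -> forall e,
  outcome cD (gda Q) e = outcome cD Y e \/ Q e (outcome cD (gda Q) e) (outcome cD Y e).
Proof.
case=> mY accY ChY.
pose Inv Rj := forall x, x \in Rj -> x \notin Y /\ Q (cD x) (Some x) (outcome cD Y (cD x)).
have offered Rj : Inv Rj -> forall z, z \in proposals Rj ->
    (z \in Y) || Q (cD z) (Some z) (outcome cD Y (cD z)).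
  move=> InvR z zY; case E: (outcome cD Y (cD z)) => [y|]; last first.
    by rewrite (chD_acceptable Q_valid zY) orbT.
  have [yY ye] := outcome_some E.
  have yR : y \in ~: Rj by rewrite inE; apply/negP=> /InvR[]; rewrite yY.
  have [<-|ne] := eqVneq y z; first by rewrite yY.
  by rewrite (chD_best Q_valid zY yR ye ne) orbT.
have round : round_invariant Inv.
  move=> Rj InvR _ x; rewrite !inE => /orP[/InvR //|/andP[xZ xY]].
  case/orP: (offered Rj InvR x xY) => [xYY|better]; last first.
    split=> //; apply: contraL better => xYY; rewrite (outcome_mem mY xYY).
    exact: (strict_pref_irr (Q_valid _) (pref_dom_some _ _)).
  case/negP: xZ; rewrite chH_mem.
  apply: (@chh_substitutable _ _ (offers Q Y (cH x))) => //.
    by move=> y yY yh; rewrite inE yh eqxx /=; apply: offered yY.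
  by rewrite ChY inE xYY eqxx.
have [Rj [inv _ ->]] := gda_spec.
have InvR : Inv Rj by apply: inv round _ => x; rewrite inE.
move=> e; case E: (outcome cD Y e) => [y|]; last first.
  case E2: (outcome cD (proposals Rj) e) => [z|]; last by left.
  by have [zY <-] := outcome_some E2; right; apply: (chD_acceptable Q_valid zY).
have [yY ye] := outcome_some E.
have yR : y \in ~: Rj by rewrite inE; apply/negP=> /InvR[]; rewrite yY.
have := chD_no_better Q_valid yR; rewrite -/(proposals Rj) ye => not_better.
have [->|ne] := eqVneq (outcome cD (proposals Rj) e) (Some y); first by left.
have dom_y : pref_dom cD e (Some y) by rewrite -ye pref_dom_some.
right; case/orP: (strict_pref_total (Q_valid e) (pref_dom_outcome cD _ e) dom_y ne) => //.
by move=> better; rewrite better in not_better.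
Qed.

End Run.

Lemma choice_stable_change_at Q Q' d Y : choice_stable Q Y ->
  (forall e, e != d -> Q' e = Q e) ->
  (forall x, cD x = d -> x \notin Y ->
     Q' d (Some x) (outcome cD Y d) -> Q d (Some x) (outcome cD Y d)) ->
  (forall x, x \in Y -> cD x = d -> Q' d (Some x) None) ->
  choice_stable Q' Y.
Proof.
case=> mY accY ChY Q'Q better acc'; split=> // [x xY|h].
  by have [xd|xd] := eqVneq (cD x) d; [rewrite {1}xd; apply: acc' | rewrite Q'Q // accY].
rewrite (@chh_sandwich h (offers Q Y h)) ?ChY ?restrH_offers //.
apply/subsetP=> x; rewrite !inE => /andP[-> /=] /orP[->//|x_better].
have [xY|xY] := boolP (x \in Y) => //=.
have [xd|xd] := eqVneq (cD x) d; last by rewrite -Q'Q.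
by move: x_better; rewrite xd => /(better x xd xY).
Qed.

Lemma card_matching Y : is_matching cD Y -> #|Y| = #|[set e | outcome cD Y e != None]|.
Proof.
move=> mY; have -> : [set e | outcome cD Y e != None] = cD @: Y.
  apply/setP=> e; rewrite inE; apply/idP/imsetP => [|[x xY ->]].
    by case E: outcome => [x|] // _; have [xY <-] := outcome_some E; exists x.
  by rewrite (outcome_mem mY xY).
rewrite card_in_imset // => x y xY yY exy.
by move: (outcome_mem mY xY); rewrite exy (outcome_mem mY yY) => -[].
Qed.

Lemma card_sum_restrH Y : #|Y| = (\sum_h #|restrH cH h Y|)%N.
Proof.
rewrite -sum1_card (partition_big cH xpredT) //=; apply: eq_bigr => h _.
by rewrite -sum1_card; apply: eq_bigl => x; rewrite inE.
Qed.

(* Rural hospitals: the doctor-optimal allocation matches no fewer doctors than Y,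
   while the law of aggregate demand lets no hospital sign more contracts in it. *)
Lemma gda_matched_in_stable Q Y : valid_profile cD Q -> choice_stable Q Y -> forall e,
  outcome cD (gda Q) e != None -> outcome cD Y e != None.
Proof.
move=> Q_valid stY; have stG := gda_choice_stable Q_valid.
have optimal := gda_doctor_optimal Q_valid stY.
case: (stY) => mY accY ChY; case: (stG) => mG _ _.
set G := gda Q in stG optimal mG *.
have matched : [set e | outcome cD Y e != None] \subset [set e | outcome cD G e != None].
  apply/subsetP=> e; rewrite !inE; case E: (outcome cD Y e) => [y|] // _.
  have [yY ye] := outcome_some E; case: (optimal e) => [->|]; first by rewrite E.
  rewrite E; case: (outcome cD G e) => [//|better]; exfalso.
  by apply: (strict_pref_asym (Q_valid e) _ _ better); rewrite -?ye ?accY ?pref_dom_some.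
have fewer h : (#|restrH cH h G| <= #|restrH cH h Y|)%N.
  rewrite -(choice_stable_restrH_id h stG) -(ChY h); apply: chh_card_mono.
  apply/subsetP=> x; rewrite !inE => /andP[xG ->] /=.
  have := optimal (cD x); rewrite (outcome_mem mG xG) => -[E|better]; last by rewrite better orbT.
  by have [-> _] := outcome_some (esym E).
have : [set e | outcome cD Y e != None] == [set e | outcome cD G e != None].
  by rewrite eqEcard matched -!card_matching // !card_sum_restrH; apply: leq_sum.
by move/eqP/setP=> eqM e; move: (eqM e); rewrite !inE => ->.
Qed.

Lemma choice_stable_outcome_acceptable Q Y e : choice_stable Q Y ->
  outcome cD Y e = None \/ Q e (outcome cD Y e) None.
Proof.
case=> _ accY _; case E: (outcome cD Y e) => [x|]; [right | by left].
by have [xY <-] := outcome_some E; apply: accY.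
Qed.

Section Manipulation.
Variables (P : profile D C) (d : D).
Hypothesis P_valid : valid_profile cD P.
Local Notation a := (outcome cD (gda P) d).

Definition truncation_to (xb : C) := update P d (truncate (pred1 (Some xb)) (P d)).

Definition truncation_above := update P d (truncate (fun u => P d u a) (P d)).

Lemma truncation_to_valid xb : valid_profile cD (truncation_to xb).
Proof. by apply: update_valid => //; apply: truncate_strict. Qed.

Lemma truncation_above_valid : valid_profile cD truncation_above.
Proof. by apply: update_valid => //; apply: truncate_strict. Qed.

Lemma truncation_to_top xb u : cD xb = d -> ~~ truncation_to xb d u (Some xb).
Proof.
rewrite /truncation_to update_self => xbd; apply/negP => above.
have [_ /eqP -> top] := truncate_above_ok (ok := pred1 (Some xb)) (eqxx (Some xb)) above.
by move: top; rewrite (negbTE (strict_pref_irr (P_valid d) _)) // -xbd pref_dom_some.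
Qed.

Lemma gda_truncation_to_matched p' xb : strict_pref cD d p' ->
  outcome cD (gda (update P d p')) d = Some xb -> outcome cD (gda (truncation_to xb)) d != None.
Proof.
move=> p'_strict E; have [_ xbd] := outcome_some E.
have st' := gda_choice_stable (update_valid P_valid p'_strict).
have [m' _ _] := st'.
have st : choice_stable (truncation_to xb) (gda (update P d p')).
  apply: (choice_stable_change_at (d := d) st') => [e ed|x _ _|x xY xd].
  - by rewrite /truncation_to !update_other.
  - by rewrite E (negbTE (truncation_to_top _ xbd)).
  - have := outcome_mem m' xY; rewrite xd E => -[->].
    by rewrite /truncation_to update_self truncate_some_none /= eqxx.
case: (gda_doctor_optimal (truncation_to_valid xb) st d) => [->|]; first by rewrite E.
by rewrite E (negbTE (truncation_to_top _ xbd)).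
Qed.

Lemma gda_truncation_above_unmatched : outcome cD (gda truncation_above) d = None.
Proof.
have stT := gda_choice_stable truncation_above_valid; have [mT accT _] := stT.
case Et: (outcome cD (gda truncation_above) d) => [c|] //; exfalso.
have [cY cd] := outcome_some Et.
have c_above : P d (Some c) a.
  by move: (accT c cY); rewrite cd /truncation_above update_self truncate_some_none.
have dom_c : pref_dom cD d (Some c) by rewrite -cd pref_dom_some.
have stP : choice_stable P (gda truncation_above).
  apply: (choice_stable_change_at (d := d) stT) => [e ed|x xd _|x xY xd].
  - by rewrite /truncation_above update_other.
  - rewrite Et => xc; have dom_x : pref_dom cD d (Some x) by rewrite -xd pref_dom_some.
    have xa := strict_pref_trans (P_valid d) dom_x dom_c (pref_dom_outcome cD _ d) xc c_above.
    by rewrite /truncation_above update_self truncate_some_ok.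
  - have := outcome_mem mT xY; rewrite xd Et => -[<-].
    have [aN|a_acc] := choice_stable_outcome_acceptable d (gda_choice_stable P_valid).
      by rewrite aN in c_above.
    apply: (strict_pref_trans (P_valid d) dom_c _ _ c_above a_acc) => //.
    exact: pref_dom_outcome.
case: (gda_doctor_optimal P_valid stP d) => [aE|ac].
  by move: c_above; rewrite aE Et (negbTE (strict_pref_irr (P_valid d) dom_c)).
rewrite Et in ac.
by apply: (strict_pref_asym (P_valid d) _ dom_c ac c_above); apply: pref_dom_outcome.
Qed.

Lemma choice_stable_truncation_to xb : P d (Some xb) a ->
  choice_stable (truncation_to xb) (gda truncation_above).
Proof.
move=> xb_above; have unmatched := gda_truncation_above_unmatched.
apply: (choice_stable_change_at (d := d) (gda_choice_stable truncation_above_valid)).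
- by move=> e ed; rewrite /truncation_to /truncation_above !update_other.
- move=> x _ _; rewrite unmatched /truncation_to update_self truncate_some_none => /eqP[->].
  by rewrite /truncation_above update_self truncate_some_none.
- by move=> x xY xd; case: (outcome_none unmatched xY xd).
Qed.

End Manipulation.

(* If d gained by reporting p', truncating her list to that better contract keeps
   her matched, while truncating it below her truthful outcome leaves her
   unmatched in an allocation that is stable for both truncations. *)
Theorem gda_strategy_proof : strategy_proof cD gda.
Proof.
move=> P d p' P_valid p'_strict /=.
set a := outcome cD (gda P) d; set b := outcome cD (gda (update P d p')) d.
have [|ab] := eqVneq a b; [by left | right].
case/orP: (strict_pref_total (P_valid d) (pref_dom_outcome cD _ d) (pref_dom_outcome cD _ d) ab)
  => // ba; exfalso; move: ba; rewrite -/a -/b.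
case Eb: b => [xb|] ba.
  have matched := gda_truncation_to_matched P_valid p'_strict Eb.
  have stable := choice_stable_truncation_to P_valid ba.
  move: (gda_matched_in_stable (truncation_to_valid d P_valid xb) stable matched).
  by rewrite gda_truncation_above_unmatched.
have [aN|a_acc] := choice_stable_outcome_acceptable d (gda_choice_stable P_valid).
  by move: ab; rewrite Eb /a aN.
by apply: (strict_pref_asym (P_valid d) _ _ a_acc ba) => //; apply: pref_dom_outcome.
Qed.

Lemma choice_stable_wsum_lt Q Y h : choice_stable Q Y -> ws h Y < B h + wbar cH wage h.
Proof. by case=> _ _ ChY; rewrite -wsum_restrH -(ChY h) chh_wsum_lt. Qed.

Lemma stable_max_budget (f : H -> {set C} -> R) (gamma : H -> R) P Y :
  (forall h, 0 < gamma h) ->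
  (forall h (Z : {set C}), {subset Z <= [pred x | cH x == h]} -> f h Z = gamma h * ws h Z) ->
  choice_stable P Y -> stable cD cH wage f P (fun h => Num.max (B h) (ws h Y)) Y.
Proof.
move=> gamma_gt0 f_wage [mY _ ChY]; split; first by split=> // h; rewrite le_max lexx orbT.
move=> h Z [_ Zh Z_better gain wZ].
have fY : f h (restrH cH h Y) = gamma h * ws h Y.
  by rewrite f_wage ?wsum_restrH // => x; rewrite inE => /andP[].
have fZ : f h Z = gamma h * ws h Z by rewrite f_wage // => x /Zh /eqP.
rewrite fY fZ ltr_pM2l // in gain.
have wZB : ws h Z <= B h.
  by move: wZ; rewrite le_max => /orP[//|/(lt_le_trans gain)]; rewrite ltxx.
have offers_fit : ws h (offers P Y h) < B h.
  rewrite ltNge; apply/negP=> /chh_wsum_ge; rewrite ChY wsum_restrH => over.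
  by move: (le_lt_trans over (lt_le_trans gain wZB)); rewrite ltxx.
have offers_Y x : x \in offers P Y h -> x \in Y.
  move=> xA; have xh : cH x = h by move: xA; rewrite inE => /andP[/eqP].
  have : x \in restrH cH h (offers P Y h) by rewrite inE xA xh eqxx.
  by rewrite -chh_wsum_lt_id // ChY inE => /andP[].
have : ws h Z <= ws h Y.
  apply: (wsum_le wage_gt0) => x xZ xh; apply: offers_Y.
  by rewrite inE xh eqxx /=; case: (boolP (x \in Y)) => //= xY; apply: Z_better.
by rewrite leNgt gain.
Qed.

End Hospitals.

Theorem theorem6 (R : realFieldType) (D H C : finType)
  (cD : C -> D) (cH : C -> H) (wage : C -> R)
  (B : H -> R) (f : H -> {set C} -> R) (gamma : H -> R) (tb : C -> nat) :
  (* contracts are distinct triples (d, h, w) *)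
  injective (fun x => (cD x, cH x, wage x)) ->
  (* budgets and wages: 0 < x_W <= B_{x_H}, B_h > 0 *)
  (forall h, 0 < B h) ->
  (forall x, 0 < wage x /\ wage x <= B (cH x)) ->
  (* every hospital has some contract, so that overline{w}_h is defined *)
  (forall h, exists x, cH x = h) ->
  (* utilities proportional to total wage *)
  (forall h, 0 < gamma h) ->
  (forall h (Y : {set C}), {subset Y <= [pred x | cH x == h]} ->
     f h Y = gamma h * wsum cH wage h Y) ->
  (* fixed tie-breaking order *)
  injective tb ->
  strategy_proof cD (gda cD cH wage B tb) /\
  (forall P : profile D C, valid_profile cD P ->
     exists B' : H -> R,
       (forall h, B h <= B' h /\ B' h < B h + wbar cH wage h) /\
       stable cD cH wage f P B' (gda cD cH wage B tb P)).
Proof.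
move=> _ B_gt0 wage_bounds hospital_has_contract gamma_gt0 f_wage tb_inj.
have wage_gt0 x : 0 < wage x by case: (wage_bounds x).
split; first exact: (gda_strategy_proof cH wage_gt0 tb_inj B_gt0).
move=> P P_valid; have stY := gda_choice_stable cH wage_gt0 tb_inj B_gt0 P_valid.
exists (fun h => Num.max (B h) (wsum cH wage h (gda cD cH wage B tb P))).
split; last exact: (stable_max_budget wage_gt0 tb_inj B_gt0 gamma_gt0 f_wage stY).
move=> h; split; first by rewrite le_max lexx.
rewrite gt_max (choice_stable_wsum_lt wage_gt0 tb_inj B_gt0 h stY) andbT.
have [x <-] := hospital_has_contract h.
by rewrite ltrDl (lt_le_trans (wage_gt0 x)) ?wage_le_wbar.
Qed.
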